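(* Let $X$ be a random variable geometrically distributed with parameter $f \in (0,1]$, i.e. $\Pr[X = k] = (1-f)^{k-1} f$ for $k \in \{1,2,\dots\}$. Then with $d_1 = 4/\pi$, $$\sqrt{\mathbb{E}[X]} \le \mathbb{E}\left[\sqrt{d_1 X}\right]$$ for all $f \in (0,1]$. *)

From Stdlib Require Import Reals.
From Coquelicot Require Import Coquelicot.
Open Scope R_scope.

Definition geom_pmf (f : R) (k : nat) : R := (1 - f) ^ (k - 1) * f.

(* Expectation E[g(X)] for X ~ Geom(f): the series sum_{k>=1} Pr[X=k] g(k)
   (summation index n = k - 1). *)
Definition geom_expect (f : R) (g : nat -> R) : R :=
  Series (fun n : nat => geom_pmf f (S n) * g (S n)).

Definition d1_const : R := 4 / PI.

From Stdlib Require Import Reals Lra Lia.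
From Coquelicot Require Import Coquelicot.
Open Scope R_scope.

(* Put q = 1 - f, so that E[g(X)] = f * sum_n g(n+1) q^n and E[X] = 1/f.  The
   coefficients a_k = C(2k,k)/4^k of (1-q)^(-1/2) satisfy 2(1-q)A' = A, hence
   sum_n 2(n+1) a_(n+1) q^n = (1-q)^(-3/2) = f^(-3/2), i.e. E[2 X a_X] = 1/sqrt f.
   Wallis' inequality pi k a_k^2 <= 1 bounds 2 k a_k by sqrt (4k/pi) termwise. *)

Lemma RInt_derive_eq (F f : R -> R) (a b : R) :
  (forall x, is_derive F x (f x)) -> (forall x, continuous f x) ->
  RInt f a b = F b - F a.
Proof.
  intros HF Hf. apply is_RInt_unique.
  apply (is_RInt_derive (V := R_CompleteNormedModule)); intros x _; auto.
Qed.

Definition wallis_int (n : nat) : R := RInt (fun x => sin x ^ n) 0 (PI / 2).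

Lemma continuous_sin_pow (n : nat) (x : R) : continuous (fun x => sin x ^ n) x.
Proof.
  apply (ex_derive_continuous (K := R_AbsRing) (V := R_NormedModule)).
  auto_derive; auto.
Qed.

Lemma ex_RInt_sin_pow (n : nat) (a b : R) : ex_RInt (fun x => sin x ^ n) a b.
Proof.
  apply (ex_RInt_continuous (V := R_CompleteNormedModule)); intros x _.
  apply continuous_sin_pow.
Qed.

Lemma wallis_int_0 : wallis_int 0 = PI / 2.
Proof.
  unfold wallis_int; simpl.
  rewrite (RInt_const (V := R_CompleteNormedModule)).
  unfold scal; simpl; unfold mult; simpl; ring.
Qed.

Lemma wallis_int_1 : wallis_int 1 = 1.
Proof.
  unfold wallis_int.
  rewrite (RInt_derive_eq (fun x => - cos x)).
  - rewrite cos_PI2, cos_0. ring.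
  - intros x. auto_derive; auto. ring.
  - apply continuous_sin_pow.
Qed.

(* Integration by parts, with [cos^2 = 1 - sin^2]. *)
Lemma wallis_int_rec (n : nat) :
  INR (S (S n)) * wallis_int (S (S n)) = INR (S n) * wallis_int n.
Proof.
  assert (Hparts :
    RInt (fun x => INR (S (S n)) * sin x ^ S (S n) - INR (S n) * sin x ^ n) 0 (PI / 2) = 0).
  { rewrite (RInt_derive_eq (fun x => - cos x * sin x ^ S n)).
    - rewrite cos_PI2, cos_0, sin_0. simpl. ring.
    - intros x. auto_derive; auto.
      change (match n with 0%nat => 1 | S _ => INR n + 1 end) with (INR (S n)).
      replace (- cos x * (1 * cos x * (INR (S n) * sin x ^ n)))
        with (- (cos x * cos x) * (INR (S n) * sin x ^ n)) by ring.
      replace (cos x * cos x) with (1 - sin x * sin x)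
        by (pose proof (sin2_cos2 x); unfold Rsqr in *; lra).
      rewrite !S_INR. simpl. ring.
    - intros x. apply (ex_derive_continuous (K := R_AbsRing) (V := R_NormedModule)).
      auto_derive; auto. }
  rewrite (RInt_minus (V := R_CompleteNormedModule)),
    !(RInt_scal (V := R_CompleteNormedModule)) in Hparts.
  - change (INR (S (S n)) * wallis_int (S (S n)) - INR (S n) * wallis_int n = 0) in Hparts.
    lra.
  all: apply (ex_RInt_continuous (V := R_CompleteNormedModule)); intros x _.
  all: apply (ex_derive_continuous (K := R_AbsRing) (V := R_NormedModule)); auto_derive; auto.
Qed.

Lemma wallis_int_succ_le (n : nat) : wallis_int (S n) <= wallis_int n.
Proof.
  unfold wallis_int. apply RInt_le.
  - pose proof PI2_RGT_0; lra.
  - apply ex_RInt_sin_pow.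
  - apply ex_RInt_sin_pow.
  - intros x Hx. pose proof PI2_Rlt_PI.
    assert (Hsin : 0 <= sin x) by (apply sin_ge_0; lra).
    pose proof (SIN_bound x). pose proof (pow_le (sin x) n Hsin).
    simpl. nra.
Qed.

(* [wallis_coef k = C(2k,k) / 4^k], the [k]-th Taylor coefficient of [(1-x)^(-1/2)]. *)
Fixpoint wallis_coef (k : nat) : R :=
  match k with
  | O => 1
  | S k => wallis_coef k * ((2 * INR k + 1) / (2 * INR k + 2))
  end.

Lemma wallis_coef_succ (n : nat) :
  2 * INR (S n) * wallis_coef (S n) = (2 * INR n + 1) * wallis_coef n.
Proof. simpl wallis_coef. rewrite S_INR. pose proof (pos_INR n). field. lra. Qed.

Lemma wallis_coef_pos (n : nat) : 0 < wallis_coef n.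
Proof.
  induction n as [|n IH]; simpl; [lra|].
  pose proof (pos_INR n).
  apply Rmult_lt_0_compat; [exact IH|]. apply Rdiv_lt_0_compat; lra.
Qed.

Lemma wallis_coef_le_1 (n : nat) : wallis_coef n <= 1.
Proof.
  induction n as [|n IH]; simpl; [lra|].
  pose proof (pos_INR n). pose proof (wallis_coef_pos n).
  assert ((2 * INR n + 1) / (2 * INR n + 2) <= 1).
  { apply Rmult_le_reg_r with (2 * INR n + 2); [lra|].
    unfold Rdiv. rewrite Rmult_assoc, Rinv_l; lra. }
  nra.
Qed.

Lemma INR_double (k : nat) : INR (2 * k) = 2 * INR k.
Proof. rewrite mult_INR. reflexivity. Qed.

Lemma wallis_int_even (k : nat) : wallis_int (2 * k) = wallis_coef k * (PI / 2).
Proof.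
  induction k as [|k IH].
  { change (2 * 0)%nat with 0%nat. rewrite wallis_int_0. simpl. ring. }
  pose proof (wallis_int_rec (2 * k)) as Hrec.
  replace (S (S (2 * k))) with (2 * S k)%nat in Hrec by lia.
  rewrite INR_double, (S_INR (2 * k)), INR_double, IH in Hrec.
  apply Rmult_eq_reg_l with (2 * INR (S k)); [|pose proof (pos_INR k); rewrite S_INR; lra].
  rewrite Hrec, <- (Rmult_assoc (2 * INR (S k))), wallis_coef_succ. ring.
Qed.

Lemma wallis_int_odd (k : nat) :
  2 * INR (S k) * wallis_coef (S k) * wallis_int (S (2 * k)) = 1.
Proof.
  induction k as [|k IH].
  { change (S (2 * 0)) with 1%nat. rewrite wallis_int_1. simpl. field. }
  pose proof (wallis_int_rec (S (2 * k))) as Hrec.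
  replace (S (S (S (2 * k)))) with (S (2 * S k)) in Hrec by lia.
  rewrite (S_INR (2 * S k)), INR_double in Hrec.
  replace (INR (S (S (2 * k)))) with (2 * INR (S k)) in Hrec
    by (rewrite !S_INR, INR_double; ring).
  rewrite wallis_coef_succ.
  transitivity (wallis_coef (S k) * ((2 * INR (S k) + 1) * wallis_int (S (2 * S k)))); [ring|].
  rewrite Hrec, <- IH. ring.
Qed.

(* Wallis' inequality, from [wallis_int (2k+2) <= wallis_int (2k+1)]. *)
Lemma wallis_coef_sq_le (n : nat) : PI * INR n * wallis_coef n ^ 2 <= 1.
Proof.
  destruct n as [|k]; [simpl; lra|].
  pose proof (wallis_int_succ_le (S (2 * k))) as Hdecr.
  replace (S (S (2 * k))) with (2 * S k)%nat in Hdecr by lia.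
  rewrite wallis_int_even in Hdecr.
  pose proof (wallis_int_odd k) as Hodd.
  assert (Hc : 0 <= 2 * INR (S k) * wallis_coef (S k)).
  { pose proof (pos_INR (S k)); pose proof (wallis_coef_pos (S k)); nra. }
  rewrite <- Hodd.
  replace (PI * INR (S k) * wallis_coef (S k) ^ 2)
    with (2 * INR (S k) * wallis_coef (S k) * (wallis_coef (S k) * (PI / 2))) by field.
  apply Rmult_le_compat_l; assumption.
Qed.

Lemma wallis_coef_le_sqrt (n : nat) : 2 * INR n * wallis_coef n <= sqrt (4 / PI * INR n).
Proof.
  pose proof (pos_INR n). pose proof (wallis_coef_pos n). pose proof PI_RGT_0.
  rewrite <- (sqrt_square (2 * INR n * wallis_coef n)) by nra.
  apply sqrt_le_1_alt.
  replace (2 * INR n * wallis_coef n * (2 * INR n * wallis_coef n))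
    with (4 / PI * INR n * (PI * INR n * wallis_coef n ^ 2)) by (simpl; field; lra).
  pose proof (wallis_coef_sq_le n).
  assert (0 <= 4 / PI * INR n) by (apply Rmult_le_pos; [apply Rlt_le, Rdiv_lt_0_compat|]; lra).
  nra.
Qed.

Lemma wallis_coef_radius (x : R) : Rabs x < 1 -> Rbar_lt (Rabs x) (CV_radius wallis_coef).
Proof.
  intros Hx. apply Rbar_lt_le_trans with 1; [exact Hx|].
  apply (proj1 (CV_radius_bounded wallis_coef)).
  exists 1. intros n.
  rewrite pow1, Rmult_1_r, Rabs_pos_eq by apply Rlt_le, wallis_coef_pos.
  apply wallis_coef_le_1.
Qed.

Lemma wallis_coef_ode (x : R) : Rabs x < 1 ->
  (1 - x) * PSeries (PS_derive wallis_coef) x = PSeries wallis_coef x / 2.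
Proof.
  intros Hx.
  assert (Hex : ex_pseries (PS_derive wallis_coef) x)
    by (apply ex_pseries_derive, wallis_coef_radius, Hx).
  rewrite Rmult_minus_distr_r, Rmult_1_l, <- PSeries_incr_1, <- PSeries_minus
    by (auto; apply ex_pseries_incr_1, Hex).
  replace (PSeries wallis_coef x / 2) with (PSeries (PS_scal (/ 2) wallis_coef) x)
    by (rewrite PSeries_scal; field).
  apply PSeries_ext. intros [|m];
    unfold PS_minus, PS_scal, PS_incr_1, PS_derive, plus, opp, scal, zero, mult;
    cbn -[INR wallis_coef].
  - simpl. field.
  - pose proof (wallis_coef_succ (S m)). lra.
Qed.

Lemma PSeries_wallis_coef (x : R) : Rabs x < 1 -> PSeries wallis_coef x * sqrt (1 - x) = 1.
Proof.
  intros Hx.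
  set (g t := PSeries wallis_coef t * sqrt (1 - t)).
  assert (Hg' : forall t, Rabs t < 1 -> is_derive g t 0).
  { intros t Ht.
    assert (Hs : 0 < sqrt (1 - t)) by (apply sqrt_lt_R0; apply Rabs_def2 in Ht; lra).
    assert (Hsqrt : is_derive (fun t => sqrt (1 - t)) t (- / (2 * sqrt (1 - t)))).
    { auto_derive; [apply Rabs_def2 in Ht; lra | unfold Rminus; ring]. }
    pose proof (is_derive_mult _ _ t _ _
                  (is_derive_PSeries _ _ (wallis_coef_radius t Ht)) Hsqrt Rmult_comm) as Hd.
    replace 0 with (plus (mult (PSeries (PS_derive wallis_coef) t) (sqrt (1 - t)))
                         (mult (PSeries wallis_coef t) (- / (2 * sqrt (1 - t))))); [exact Hd|].
    unfold plus, mult; simpl.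
    pose proof (wallis_coef_ode t Ht) as Hode.
    assert (Hss : sqrt (1 - t) * sqrt (1 - t) = 1 - t)
      by (apply sqrt_sqrt; apply Rabs_def2 in Ht; lra).
    set (s := sqrt (1 - t)) in *. rewrite <- Hss in Hode.
    apply Rmult_eq_reg_r with s; [|lra].
    field_simplify; [|lra]. lra. }
  assert (Hcont : forall t, Rabs t < 1 -> continuity_pt g t).
  { intros t Ht. apply continuity_pt_filterlim.
    apply (ex_derive_continuous (K := R_AbsRing) (V := R_NormedModule)).
    exists 0. apply Hg', Ht. }
  assert (Hseg : forall t, Rmin 0 x <= t <= Rmax 0 x -> Rabs t < 1).
  { intros t [Hlo Hhi]. apply Rabs_def2 in Hx. apply Rabs_def1.
    - apply Rle_lt_trans with (Rmax 0 x); [exact Hhi|]. apply Rmax_lub_lt; lra.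
    - apply Rlt_le_trans with (Rmin 0 x); [|exact Hlo]. apply Rmin_glb_lt; lra. }
  destruct (MVT_gen g 0 x (fun _ => 0)) as [c [_ Hc]].
  - intros t Ht. apply Hg', Hseg. lra.
  - intros t Ht. apply Hcont, Hseg, Ht.
  - unfold g in Hc. rewrite PSeries_0, Rminus_0_r, sqrt_1 in Hc. simpl in Hc. lra.
Qed.

Lemma PSeries_derive_wallis_coef (x : R) : Rabs x < 1 ->
  PSeries (PS_derive wallis_coef) x = / (2 * (1 - x) * sqrt (1 - x)).
Proof.
  intros Hx.
  pose proof (wallis_coef_ode x Hx) as Hode.
  pose proof (PSeries_wallis_coef x Hx) as Hclosed.
  assert (Hpos : 0 < 1 - x) by (apply Rabs_def2 in Hx; lra).
  pose proof (sqrt_lt_R0 _ Hpos) as Hs.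
  apply Rmult_eq_reg_l with (2 * (1 - x) * sqrt (1 - x)); [|nra].
  rewrite Rinv_r by nra.
  replace (2 * (1 - x) * sqrt (1 - x) * PSeries (PS_derive wallis_coef) x)
    with (2 * ((1 - x) * PSeries (PS_derive wallis_coef) x) * sqrt (1 - x)) by ring.
  rewrite Hode. lra.
Qed.

Lemma is_series_succ_geom (q : R) : Rabs q < 1 ->
  is_series (fun n => INR (S n) * q ^ n) (/ (1 - q) ^ 2).
Proof.
  intros Hq.
  assert (Habs : ex_series (fun n => Rabs (q ^ n))).
  { exists (/ (1 - Rabs q)).
    apply (is_series_ext (fun n => Rabs q ^ n)); [intros n; apply RPow_abs|].
    apply is_series_geom. rewrite Rabs_Rabsolu. exact Hq. }
  pose proof (is_series_mult _ _ _ _ (is_series_geom q Hq) (is_series_geom q Hq) Habs Habs)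
    as Hprod.
  replace (/ (1 - q) ^ 2) with (/ (1 - q) * / (1 - q))
    by (apply Rabs_def2 in Hq; field; lra).
  revert Hprod. apply is_series_ext. intros n.
  rewrite (sum_eq _ (fun _ => q ^ n)).
  - rewrite sum_cte. apply Rmult_comm.
  - intros i Hi. rewrite <- pow_add. f_equal. lia.
Qed.

Lemma sqrt_le_succ (y : R) : 0 <= y -> sqrt y <= y + 1.
Proof. intros Hy. pose proof (sqrt_pos y). pose proof (sqrt_sqrt y Hy). nra. Qed.

Lemma ex_series_sqrt_succ_geom (c q : R) : 0 <= c -> Rabs q < 1 ->
  ex_series (fun n => sqrt (c * INR (S n)) * q ^ n).
Proof.
  intros Hc Hq.
  apply (ex_series_le (K := R_AbsRing) (V := R_CompleteNormedModule) _
           (fun n => (c + 1) * (INR (S n) * Rabs q ^ n))).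
  - intros n. change (norm ?y) with (Rabs y).
    rewrite Rabs_mult, Rabs_pos_eq by apply sqrt_pos.
    rewrite RPow_abs, <- Rmult_assoc.
    apply Rmult_le_compat_r; [apply Rabs_pos|].
    pose proof (sqrt_le_succ (c * INR (S n)) ltac:(apply Rmult_le_pos; auto using pos_INR)).
    pose proof (pos_INR n). rewrite S_INR in *. nra.
  - apply (ex_series_scal_l (K := R_AbsRing) (V := R_NormedModule)).
    eexists. apply is_series_succ_geom. rewrite Rabs_Rabsolu. exact Hq.
Qed.

Lemma geom_expect_Series (f : R) (g : nat -> R) :
  geom_expect f g = f * Series (fun n => g (S n) * (1 - f) ^ n).
Proof.
  unfold geom_expect, geom_pmf. rewrite <- Series_scal_l.
  apply Series_ext. intros n. rewrite Nat.sub_succ, Nat.sub_0_r. ring.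
Qed.

Lemma PS_derive_wallis_coef_bounds (n : nat) :
  0 <= 2 * PS_derive wallis_coef n <= sqrt (d1_const * INR (S n)).
Proof.
  unfold PS_derive, d1_const. rewrite <- Rmult_assoc. split.
  - pose proof (pos_INR (S n)). pose proof (wallis_coef_pos (S n)). nra.
  - apply wallis_coef_le_sqrt.
Qed.

Theorem lemma7 (f : R) (hf : 0 < f <= 1) :
  sqrt (geom_expect f (fun k => INR k)) <=
  geom_expect f (fun k => sqrt (d1_const * INR k)).
Proof.
  assert (Hq : Rabs (1 - f) < 1) by (rewrite Rabs_pos_eq; lra).
  assert (Hs : 0 < sqrt f) by (apply sqrt_lt_R0; lra).
  rewrite !geom_expect_Series, (is_series_unique _ _ (is_series_succ_geom _ Hq)).
  replace (f * / (1 - (1 - f)) ^ 2) with (/ f) by (field; lra).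
  rewrite sqrt_inv.
  apply Rle_trans with (f * Series (fun n => 2 * PS_derive wallis_coef n * (1 - f) ^ n)).
  - rewrite (Series_ext _ (fun n => 2 * (PS_derive wallis_coef n * (1 - f) ^ n)))
      by (intros; ring).
    rewrite Series_scal_l.
    change (Series (fun n => PS_derive wallis_coef n * (1 - f) ^ n))
      with (PSeries (PS_derive wallis_coef) (1 - f)).
    rewrite PSeries_derive_wallis_coef by exact Hq.
    replace (1 - (1 - f)) with f by ring.
    right. field. lra.
  - apply Rmult_le_compat_l; [lra|]. apply Series_le.
    + intros n. pose proof (pow_le (1 - f) n ltac:(lra)).
      pose proof (PS_derive_wallis_coef_bounds n). split; nra.
    + apply ex_series_sqrt_succ_geom; [|exact Hq].
      pose proof PI_RGT_0. unfold d1_const. apply Rlt_le, Rdiv_lt_0_compat; lra.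
Qed.
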